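(* Let $d\ge 0$, $n\ge 1$ and $p$ prime. If $c,c'\in C(d,n,p)$, then both $\operatorname{lcm}(c,c')=(\max(c_1,c_1'),\dots,\max(c_M,c_M'))$ and $\gcd(c,c')=(\min(c_1,c_1'),\dots,\min(c_M,c_M'))$ belong to $C(d,n,p)$. Consequently $C(d,n,p)$, with the componentwise partial order ($c\le c'$ iff $c_i\le c_i'$ for all $i$), is a finite lattice, and in particular it has a unique maximal element.
   Context: Let $p$ be a prime. Every integer $a\ge0$ has base-$p$ expansion $a=\sum_{j\ge0}a_jp^j$ with digits $0\le a_j\le p-1$. For $d\ge1$ let $M=\max\{j: d_j\ne0\}$. Let $S=\mathbf{k}[x_1,\dots,x_n]$ with $\mathbf k$ algebraically closed of characteristic $p$. For a monomial $x^{\underline b}=x_1^{b_1}\cdots x_n^{b_n}$ of degree $d=b_1+\cdots+b_n$, write $b_{i,j}$ for the $j$-th base-$p$ digit of $b_i$. Its carry pattern is $c(\underline b)=(c_1,\dots,c_M)$, the integers determined by $\sum_{i=1}^n\sum_{0\le j<\ell} b_{i,j}p^j = c_\ell p^\ell+\sum_{0\le j<\ell} d_jp^j$ for $1\le \ell\le M$ (with the convention $c_i=0$ for $i<1$ and $i>M$); i.e. $c_\ell$ is the amount carried into the $p^\ell$ column when adding $b_1,\dots,b_n$ in base $p$. $C(d,n,p)$ denotes the set of all carry patterns of degree-$d$ monomials in $n$ variables (for $d=0$ it consists of the empty sequence). *)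

From mathcomp Require Import all_boot.
Set Implicit Arguments. Unset Strict Implicit. Unset Printing Implicit Defensive.

Definition digit (p a j : nat) : nat := (a %/ p ^ j) %% p.

(* M = max {j : d_j <> 0}; the bound j <= d suffices since p^j > d for j > d
   when p >= 2.  For d = 0 this is 0, so the carry pattern is empty. *)
Definition topM (p d : nat) : nat := \max_(j < d.+1 | digit p d j != 0) (j : nat).

(* c is the carry pattern (c_1,...,c_M), c_l = nth 0 c l.-1, of the monomial
   with exponent vector b (b_i is the exponent of x_i) *)
Definition is_carry_pattern (p d : nat) {n : nat} (b : 'I_n -> nat) (c : seq nat) : Prop :=
  size c = topM p d /\
  forall l, 1 <= l <= topM p d ->
    \sum_(i < n) \sum_(0 <= j < l) digit p (b i) j * p ^ j
    = nth 0 c l.-1 * p ^ l + \sum_(0 <= j < l) digit p d j * p ^ j.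

Definition inC (d n p : nat) (c : seq nat) : Prop :=
  exists b : 'I_n -> nat, \sum_(i < n) b i = d /\ is_carry_pattern p d b c.

Definition lcm_cp (c c' : seq nat) : seq nat := [seq maxn x.1 x.2 | x <- zip c c'].
Definition gcd_cp (c c' : seq nat) : seq nat := [seq minn x.1 x.2 | x <- zip c c'].

Definition cp_le (c c' : seq nat) : bool := all2 leq c c'.

Definition is_maximal_in (P : seq nat -> Prop) (m : seq nat) : Prop :=
  P m /\ forall c, P c -> cp_le m c -> c = m.

From mathcomp Require Import all_boot zify.
From Stdlib Require Import ClassicalEpsilon.
Set Implicit Arguments. Unset Strict Implicit. Unset Printing Implicit Defensive.

(* Adding b_1, ..., b_n column by column, column l receives the carry c_l and
   the digit sum s_l, which may be any value in [0, n(p-1)], and emits the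
   digit d_l and the carry c_(l+1); so p c_(l+1) + d_l = c_l + s_l.
   Conversely, digit sums can be distributed greedily over the n variables,
   hence C(d,n,p) consists exactly of the sequences satisfying
   c_l <= p c_(l+1) + d_l <= c_l + n(p-1) for all l <= M, with c_0 = c_(M+1) = 0.
   Each of these constraints is of the shape x <= p y + k <= x + K, which is
   preserved by componentwise maxima and minima.  Carries are at most d, so
   C(d,n,p) is finite, and the join of all its elements is its maximum. *)

Section Digits.

Variable p : nat.
Hypothesis p_gt0 : 0 < p.

Lemma digit_lt a j : digit p a j < p.
Proof. exact: ltn_pmod. Qed.

Lemma modn_expS_digit a l : a %% p ^ l.+1 = a %% p ^ l + digit p a l * p ^ l.
Proof.
rewrite /digit; set q := a %/ p ^ l.
have pl_gt0 : 0 < p ^ l by rewrite expn_gt0 p_gt0.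
have a_eq : a = q %/ p * p ^ l.+1 + (q %% p * p ^ l + a %% p ^ l).
  by rewrite {1}(divn_eq a (p ^ l)) -/q {1}(divn_eq q p) expnSr mulnDl -mulnA
             (mulnC p) addnA.
rewrite {1}a_eq modnMDl modn_small 1?addnC //.
apply: (@leq_trans (q %% p * p ^ l + p ^ l)); first by rewrite addnC ltn_add2l ltn_pmod.
by rewrite -mulSnr expnSr mulnC leq_mul2l ltn_pmod ?orbT.
Qed.

Lemma sum_digits a l : \sum_(0 <= j < l) digit p a j * p ^ j = a %% p ^ l.
Proof.
elim: l => [|l IH]; first by rewrite big_geq // expn0 modn1.
by rewrite big_nat_recr //= IH modn_expS_digit.
Qed.

Lemma sum_digitseq_lt (e : nat -> nat) l : (forall j, e j < p) ->
  \sum_(0 <= j < l) e j * p ^ j < p ^ l.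
Proof.
move=> e_lt; elim: l => [|l IH]; first by rewrite big_geq.
rewrite big_nat_recr //=.
apply: (@leq_trans (e l * p ^ l + p ^ l)); first by rewrite addnC ltn_add2l.
by rewrite -mulSnr expnSr mulnC leq_mul2l e_lt orbT.
Qed.

Lemma modn_sum_digitseq (e : nat -> nat) k l : (forall j, e j < p) -> l <= k ->
  (\sum_(0 <= j < k) e j * p ^ j) %% p ^ l = \sum_(0 <= j < l) e j * p ^ j.
Proof.
move=> e_lt le_lk; rewrite (@big_cat_nat _ _ _ l 0 k _ _ (leq0n l) le_lk) /=.
have dvd_high : p ^ l %| \sum_(l <= j < k) e j * p ^ j.
  rewrite big_nat_cond; apply: dvdn_sum => j /andP[/andP[le_lj _] _].
  by rewrite dvdn_mull // dvdn_exp2l.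
by rewrite addnC -(divnK dvd_high) modnMDl modn_small // sum_digitseq_lt.
Qed.

End Digits.

Section TopDigit.

Variables p d : nat.
Hypothesis p_gt1 : 1 < p.

Let p_gt0 : 0 < p := ltnW p_gt1.

Lemma topM_le : topM p d <= d.
Proof. by apply/bigmax_leqP => j _; rewrite -ltnS ltn_ord. Qed.

Lemma digit_gt_topM j : topM p d < j -> digit p d j = 0.
Proof.
move=> lt_Mj; have [le_jd | lt_dj] := ltnP j d.+1.
  apply/eqP; apply: contraTT lt_Mj => nz_dj; rewrite -leqNgt.
  exact: (@leq_bigmax_cond _ (fun j : 'I_d.+1 => digit p d j != 0) _ (Ordinal le_jd)).
rewrite /digit divn_small ?mod0n //.
exact: leq_trans lt_dj (ltnW (ltn_expl j p_gt1)).
Qed.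

Lemma modn_topM k : topM p d < k -> d %% p ^ k = d.
Proof.
have sum_top j : topM p d < j -> \sum_(0 <= i < j) digit p d i * p ^ i
                                = \sum_(0 <= i < (topM p d).+1) digit p d i * p ^ i.
  move=> lt_Mj; rewrite (@big_cat_nat _ _ _ (topM p d).+1) //=.
  rewrite [X in _ + X]big1_seq ?addn0 // => i /andP[_].
  by rewrite mem_index_iota => /andP[lt_Mi _]; rewrite digit_gt_topM.
move=> lt_Mk; rewrite -sum_digits // sum_top // -(sum_top d.+1) ?ltnS ?topM_le //.
by rewrite sum_digits // modn_small // ltnW // ltn_expl.
Qed.

End TopDigit.

(* carry c l is c_l, with c_0 = 0 and c_l = 0 beyond size c *)
Definition carry (c : seq nat) (l : nat) : nat :=
  if l is l'.+1 then nth 0 c l' else 0.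

Definition feasible (d n p : nat) (c : seq nat) : Prop :=
  size c = topM p d /\
  forall l, l <= topM p d ->
    carry c l <= p * carry c l.+1 + digit p d l <= carry c l + n * (p - 1).

Lemma greedy_sum k s n : \sum_(i < n) minn k (s - i * k) = minn s (n * k).
Proof. by elim: n => [|n IH]; rewrite ?big_ord0 ?minn0 // big_ord_recr /= IH mulSn; lia. Qed.

Section CarryPatterns.

Variables d n p : nat.
Hypothesis p_gt1 : 1 < p.

Let p_gt0 : 0 < p := ltnW p_gt1.

Section Monomial.

Variables (b : 'I_n -> nat) (c : seq nat).
Hypotheses (sum_b : \sum_(i < n) b i = d) (carry_b : is_carry_pattern p d b c).

Lemma carry_pattern_modn l :
  \sum_(i < n) b i %% p ^ l = carry c l * p ^ l + d %% p ^ l.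
Proof.
have [size_c carry_c] := carry_b.
case: l => [|l]; first by rewrite expn0 modn1 mul0n big1 // => i _; rewrite modn1.
have [le_lM | lt_Ml] := leqP l.+1 (topM p d).
  rewrite /= -sum_digits // -(carry_c l.+1 le_lM).
  by apply: eq_bigr => i _; rewrite sum_digits.
rewrite /= nth_default ?size_c // mul0n modn_topM // -{1}sum_b.
apply: eq_bigr => i _; rewrite modn_small //.
have le_bd : b i <= d by rewrite -sum_b (bigD1 i) //= leq_addr.
by rewrite (leq_ltn_trans le_bd) // -{1}(modn_topM p_gt1 lt_Ml) ltn_pmod ?expn_gt0 ?p_gt0.
Qed.

Lemma carry_pattern_column l :
  p * carry c l.+1 + digit p d l = carry c l + \sum_(i < n) digit p (b i) l.
Proof.
have := carry_pattern_modn l.+1.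
rewrite (eq_bigr (fun i => b i %% p ^ l + digit p (b i) l * p ^ l)); last first.
  by move=> i _; rewrite modn_expS_digit.
rewrite big_split /= -big_distrl /= carry_pattern_modn modn_expS_digit // expnS.
move=> eq_l; apply/eqP; rewrite -(@eqn_pmul2r (p ^ l)) ?expn_gt0 ?p_gt0 //.
by apply/eqP; rewrite !mulnDl (mulnC p) -mulnA; lia.
Qed.

Lemma carry_pattern_bounded : all (fun x => x <= d) c.
Proof.
apply/(all_nthP 0) => i _; have := carry_pattern_modn i.+1; rewrite /= => eq_i.
have le_cd : nth 0 c i * p ^ i.+1 <= d.
  rewrite -[leqRHS]sum_b (@leq_trans (\sum_(j < n) b j %% p ^ i.+1)) //.
    by rewrite eq_i leq_addr.
  by apply: leq_sum => j _; apply: leq_mod.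
by rewrite (leq_trans _ le_cd) // leq_pmulr // expn_gt0 p_gt0.
Qed.

Lemma carry_pattern_feasible : feasible d n p c.
Proof.
split; first by case: carry_b.
move=> l _; rewrite carry_pattern_column leq_addr leq_add2l /=.
rewrite -[X in _ <= X * _]card_ord -sum_nat_const leq_sum // => i _.
by rewrite -ltnS subn1 prednK ?digit_lt.
Qed.

End Monomial.

Definition column_sum (c : seq nat) (l : nat) : nat :=
  p * carry c l.+1 + digit p d l - carry c l.

Lemma feasible_sum_column_sum c l : feasible d n p c -> l <= (topM p d).+1 ->
  \sum_(0 <= j < l) column_sum c j * p ^ j = carry c l * p ^ l + d %% p ^ l.
Proof.
move=> [_ feas_c]; elim: l => [|l IH] le_lM.
  by rewrite big_geq // expn0 modn1.
rewrite big_nat_recr //= IH ?(ltnW le_lM) // modn_expS_digit //.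
have /andP[le_col _] := feas_c l le_lM.
have := leq_mul le_col (leqnn (p ^ l)); rewrite mulnDl => le_col_pl.
by rewrite /column_sum mulnBl mulnDl expnS mulnA (mulnC (carry c l.+1) p); lia.
Qed.

Lemma feasible_inC c : feasible d n p c -> inC d n p c.
Proof.
move=> feas_c; have [size_c col_c] := feas_c; set M := topM p d.
pose e (i : 'I_n) l := minn (p - 1) (column_sum c l - i * (p - 1)).
pose b (i : 'I_n) := \sum_(0 <= l < M.+1) e i l * p ^ l.
have e_lt i l : e i l < p by rewrite /e; lia.
have sum_e l : l <= M -> \sum_(i < n) e i l = column_sum c l.
  by move=> le_lM; rewrite /e greedy_sum; have := col_c l le_lM; rewrite /column_sum; lia.
have sum_b_modn l : l <= M.+1 ->
    \sum_(i < n) b i %% p ^ l = carry c l * p ^ l + d %% p ^ l.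
  move=> le_lM; rewrite -feasible_sum_column_sum //.
  rewrite (eq_bigr (fun i => \sum_(0 <= j < l) e i j * p ^ j)); last first.
    by move=> i _; rewrite modn_sum_digitseq.
  rewrite exchange_big /=; apply: eq_big_nat => j /andP[_ lt_jl].
  by rewrite -big_distrl /= sum_e // -ltnS (leq_trans lt_jl).
exists b; split.
  have := sum_b_modn M.+1 (leqnn _).
  rewrite /= nth_default ?size_c // mul0n add0n modn_topM // => <-.
  by apply: eq_bigr => i _; rewrite modn_small // sum_digitseq_lt.
split=> // -[|l] // /andP[_ le_lM].
rewrite (eq_bigr (fun i => b i %% p ^ l.+1)); last by move=> i _; rewrite sum_digits.
by rewrite sum_b_modn ?(leqW le_lM) // sum_digits.
Qed.

Lemma inCE c : inC d n p c <-> feasible d n p c.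
Proof.
split; last exact: feasible_inC.
by case=> b [sum_b carry_b]; apply: carry_pattern_feasible carry_b.
Qed.

End CarryPatterns.

Lemma column_maxn p x x' y y' k K :
  x <= p * y + k <= x + K -> x' <= p * y' + k <= x' + K ->
  maxn x x' <= p * maxn y y' + k <= maxn x x' + K.
Proof. by rewrite maxnMr; move: (p * y) (p * y') => z z'; lia. Qed.

Lemma column_minn p x x' y y' k K :
  x <= p * y + k <= x + K -> x' <= p * y' + k <= x' + K ->
  minn x x' <= p * minn y y' + k <= minn x x' + K.
Proof. by rewrite minnMr; move: (p * y) (p * y') => z z'; lia. Qed.

Lemma nth_map_zip (f : nat -> nat -> nat) (c c' : seq nat) i :
  f 0 0 = 0 -> size c = size c' ->
  nth 0 [seq f x.1 x.2 | x <- zip c c'] i = f (nth 0 c i) (nth 0 c' i).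
Proof.
move=> f00 eq_size; have [lt_ic | le_ci] := ltnP i (size c).
  by rewrite (nth_map (0, 0)) ?nth_zip // size_zip -eq_size minnn.
by rewrite !nth_default ?size_map ?size_zip -?eq_size ?minnn.
Qed.

Lemma carry_lcm c c' l : size c = size c' ->
  carry (lcm_cp c c') l = maxn (carry c l) (carry c' l).
Proof. by case: l => //= l; apply: nth_map_zip. Qed.

Lemma carry_gcd c c' l : size c = size c' ->
  carry (gcd_cp c c') l = minn (carry c l) (carry c' l).
Proof. by case: l => //= l; apply: nth_map_zip. Qed.

Section Lattice.

Variables d n p : nat.

Lemma feasible_lcm c c' :
  feasible d n p c -> feasible d n p c' -> feasible d n p (lcm_cp c c').
Proof.
move=> [size_c col_c] [size_c' col_c']; have eq_size : size c = size c' by rewrite size_c.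
split=> [|l le_lM]; first by rewrite size_map size_zip eq_size minnn.
by rewrite !carry_lcm //; apply: column_maxn; [apply: col_c | apply: col_c'].
Qed.

Lemma feasible_gcd c c' :
  feasible d n p c -> feasible d n p c' -> feasible d n p (gcd_cp c c').
Proof.
move=> [size_c col_c] [size_c' col_c']; have eq_size : size c = size c' by rewrite size_c.
split=> [|l le_lM]; first by rewrite size_map size_zip eq_size minnn.
by rewrite !carry_gcd //; apply: column_minn; [apply: col_c | apply: col_c'].
Qed.

Lemma feasible_nseq0 : 0 < n -> 0 < p -> feasible d n p (nseq (topM p d) 0).
Proof.
move=> n_gt0 p_gt0; split=> [|l _]; first by rewrite size_nseq.
have carry0 k : carry (nseq (topM p d) 0) k = 0 by case: k => //= k; rewrite nth_nseq if_same.
rewrite !carry0 muln0 /= (leq_trans _ (leq_pmull _ n_gt0)) //.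
by rewrite -ltnS subn1 prednK ?digit_lt.
Qed.

Section Join.

Variable c0 : seq nat.
Hypothesis feas_c0 : feasible d n p c0.

Lemma feasible_foldr_lcm (s : seq (seq nat)) :
  (forall c, c \in s -> feasible d n p c) -> feasible d n p (foldr lcm_cp c0 s).
Proof.
elim: s => [|c s IH] //= feas_cs.
apply: feasible_lcm; first exact/feas_cs/mem_head.
by apply: IH => c' c'_s; apply: feas_cs; rewrite inE c'_s orbT.
Qed.

Lemma nth_foldr_lcm_ge (s : seq (seq nat)) c i :
  (forall c, c \in s -> feasible d n p c) -> c \in s ->
  nth 0 c i <= nth 0 (foldr lcm_cp c0 s) i.
Proof.
elim: s => [|c' s IH] //= feas_cs.
have feas_s c'' : c'' \in s -> feasible d n p c''.
  by move=> c''_s; apply: feas_cs; rewrite inE c''_s orbT.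
have [[size_c' _] [size_fold _]] := (feas_cs c' (mem_head c' s), feasible_foldr_lcm feas_s).
rewrite nth_map_zip ?size_c' ?size_fold // inE => /orP[/eqP-> | c_s].
  exact: leq_maxl.
exact: leq_trans (IH feas_s c_s) (leq_maxr _ _).
Qed.

End Join.

End Lattice.

Lemma cp_leP c c' : size c = size c' ->
  reflect (forall i, nth 0 c i <= nth 0 c' i) (cp_le c c').
Proof.
elim: c c' => [|x c IH] [|x' c'] //= => [_|[eq_size]]; first by left.
apply: (iffP andP) => [[le_xx' /(IH _ eq_size) le_cc'] [|i] // | le_nth].
  exact: le_cc'.
by split; [apply: (le_nth 0) | apply/IH => // i; apply: (le_nth i.+1)].
Qed.

Lemma cp_le_anti c c' : cp_le c c' -> cp_le c' c -> c = c'.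
Proof.
elim: c c' => [|x c IH] [|x' c'] //= /andP[le_xx' le_cc'] /andP[le_x'x le_c'c].
by rewrite (IH c') //; congr (_ :: _); apply/eqP; rewrite eqn_leq le_xx'.
Qed.

Fixpoint bounded_seqs (m k : nat) : seq (seq nat) :=
  if k is k'.+1 then [seq x :: s | x <- iota 0 m.+1, s <- bounded_seqs m k']
  else [:: [::]].

Lemma mem_bounded_seqs m s : all (fun x => x <= m) s -> s \in bounded_seqs m (size s).
Proof.
elim: s => [|x s IH] // /andP[le_xm le_sm].
by apply: (allpairs_f cons); rewrite ?mem_iota ?ltnS ?le_xm ?IH.
Qed.

Lemma finite_prop_enum (T : eqType) (P : T -> Prop) (L : seq T) :
  (forall x, P x -> x \in L) -> exists s : seq T, forall x, P x <-> x \in s.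
Proof.
move=> P_L; exists [seq x <- L | excluded_middle_informative (P x)] => x.
rewrite mem_filter; case: excluded_middle_informative => //= Px.
by split=> // /P_L.
Qed.

Lemma inC_finite d n p : 1 < p -> exists s : seq (seq nat), forall c, inC d n p c <-> c \in s.
Proof.
move=> p_gt1; apply: (finite_prop_enum (L := bounded_seqs d (topM p d))) => c inC_c.
have [[size_c _] [b [sum_b carry_b]]] := (proj1 (inCE d n p_gt1 c) inC_c, inC_c).
by rewrite -size_c mem_bounded_seqs // (carry_pattern_bounded p_gt1 sum_b carry_b).
Qed.

Lemma inC_greatest d n p : 0 < n -> 1 < p ->
  exists2 m, inC d n p m & forall c, inC d n p c -> cp_le c m.
Proof.
move=> n_gt0 p_gt1; have [s inC_s] := inC_finite d n p_gt1.
have feas_c0 := feasible_nseq0 d n_gt0 (ltnW p_gt1).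
have feas_s c : c \in s -> feasible d n p c by move/inC_s/(inCE d n p_gt1).
have feas_m := feasible_foldr_lcm feas_c0 feas_s.
exists (foldr lcm_cp (nseq (topM p d) 0) s) => [|c inC_c]; first exact/(inCE d n p_gt1).
have [[size_c _] [size_m _]] := (proj1 (inCE d n p_gt1 c) inC_c, feas_m).
apply/cp_leP => [|i]; first by rewrite size_c size_m.
by apply: nth_foldr_lcm_ge feas_c0 _ _ _ feas_s _; apply/inC_s.
Qed.

Theorem mainTheorem1 (d n p : nat) (hn : 1 <= n) (hp : prime p) :
  (forall c c', inC d n p c -> inC d n p c' ->
     inC d n p (lcm_cp c c') /\ inC d n p (gcd_cp c c'))
  /\ (exists s : seq (seq nat), forall c, inC d n p c <-> c \in s)
  /\ (exists m, is_maximal_in (inC d n p) m /\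
        forall m', is_maximal_in (inC d n p) m' -> m' = m).
Proof.
have p_gt1 := prime_gt1 hp; have feasibleE := inCE d n p_gt1.
split=> [c c' /feasibleE feas_c /feasibleE feas_c'|].
  by split; apply/feasibleE; [apply: feasible_lcm | apply: feasible_gcd].
split; first exact: inC_finite.
have [m inC_m ge_m] := inC_greatest d hn p_gt1.
exists m; split=> [|m' [inC_m' max_m']]; last exact/esym/max_m'/ge_m.
by split=> // c inC_c le_mc; apply: cp_le_anti (ge_m c inC_c) le_mc.
Qed.
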